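(* Assume Assumptions 1 (randomization), 2 (monotonicity) and 3 (homogeneity), and the positivity conditions $P(R=r)>0$ and $0<P(Z=1\mid R=r)<1$ for every $r$, and $P(U=u)>0$ for $u\in\{ss,s\bar{s},\bar{s}\bar{s}\}$. Then, for $u\in\{ss,s\bar{s},\bar{s}\bar{s}\}$: (a) if Assumption 4(a) holds, then $P(Y=1\mid Z=1,U=u)$ is identifiable for every such $u$; (b) if Assumption 4(b) holds, then $P(Y=1\mid Z=0,U=u)$ is identifiable for every such $u$; (c) if both Assumptions 4(a) and 4(b) hold, then $ACE_u$ is identifiable for every such $u$. Here a quantity is identifiable if any two joint distributions of $(R,Z,S(1),S(0),Y(1),Y(0))$ that satisfy the stated assumptions and induce the same distribution of the observed vector $(R,Z,S,Y)$ give the same value of that quantity.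
   Context: Setting: there are $N_R$ trials. A unit is described by a random vector $(R,Z,S(1),S(0),Y(1),Y(0))$, where $R\in\{1,\dots,N_R\}$ is the trial number, $Z\in\{0,1\}$ the treatment assignment, and $S(z),Y(z)\in\{0,1\}$ the potential surrogate and potential endpoint under treatment $z$. Observed: $S=ZS(1)+(1-Z)S(0)$, $Y=ZY(1)+(1-Z)Y(0)$. Principal stratum $U=(S(1),S(0))$ with values $(1,1),(1,0),(0,1),(0,0)$ labeled $ss,s\bar{s},\bar{s}s,\bar{s}\bar{s}$. $\pi_{ur}=P(U=u\mid R=r)$. Assumption 1 (randomization): $Z\perp\!\!\!\perp\{S(1),S(0),Y(1),Y(0)\}\mid R$. Assumption 2 (monotonicity): $S(1)\ge S(0)$ almost surely (so $\pi_{\bar{s}s,r}=0$ for all $r$). Assumption 3 (homogeneity): $R\perp\!\!\!\perp Y(z)\mid U$ for $z=0,1$. Under Assumptions 1 and 3, $ACE_{ur}=E\{Y(1)-Y(0)\mid U=u,R=r\}$ does not depend on $r$ and is denoted $ACE_u$; it equals $P(Y=1\mid Z=1,U=u)-P(Y=1\mid Z=0,U=u)$. Assumption 4(a): there exist trials $r_1,r_2$ with $\pi_{ss,r_1}\pi_{s\bar{s},r_2}\neq\pi_{ss,r_2}\pi_{s\bar{s},r_1}$. Assumption 4(b): there exist trials $r_3,r_4$ with $\pi_{s\bar{s},r_3}\pi_{\bar{s}\bar{s},r_4}\neq\pi_{s\bar{s},r_4}\pi_{\bar{s}\bar{s},r_3}$. *)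

From HB Require Import structures.
From mathcomp Require Import all_boot all_order all_algebra.
Set Implicit Arguments. Unset Strict Implicit. Unset Printing Implicit Defensive.
Import Order.TTheory GRing.Theory Num.Theory.
Local Open Scope ring_scope.

(* A unit: (R, Z, S(1), S(0), Y(1), Y(0)); trials 1..N_R are indexed by 'I_N
   (trial r+1 of the paper is the ordinal r). Booleans encode {0,1}. *)
Definition outcome (N : nat) : finType :=
  ('I_N * bool * bool * bool * bool * bool)%type.

Section Defs.
Variables (R : realFieldType) (N : nat).
Implicit Types (x : outcome N) (p : outcome N -> R).

Definition oR  x : 'I_N := x.1.1.1.1.1.
Definition oZ  x : bool := x.1.1.1.1.2.
Definition oS1 x : bool := x.1.1.1.2.
Definition oS0 x : bool := x.1.1.2.
Definition oY1 x : bool := x.1.2.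
Definition oY0 x : bool := x.2.
Definition oS x : bool := if oZ x then oS1 x else oS0 x.
Definition oY x : bool := if oZ x then oY1 x else oY0 x.
Definition oU x : bool * bool := (oS1 x, oS0 x).

Definition u_ss  : bool * bool := (true, true).
Definition u_ssb : bool * bool := (true, false).
Definition u_sbs : bool * bool := (false, true).
Definition u_sbsb : bool * bool := (false, false).

Definition is_dist p := (forall x, 0 <= p x) /\ \sum_x p x = 1.

Definition Pr p (A : pred (outcome N)) : R := \sum_(x | A x) p x.
Definition CPr p (A B : pred (outcome N)) : R :=
  Pr p (fun x => A x && B x) / Pr p B.

(* Assumption 1: Z independent of (S(1),S(0),Y(1),Y(0)) given R *)
Definition randomization p :=
  forall r z s1 s0 y1 y0,
    Pr p (fun x => [&& oR x == r, oZ x == z, oS1 x == s1, oS0 x == s0,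
                       oY1 x == y1 & oY0 x == y0]) * Pr p (fun x => oR x == r)
    = Pr p (fun x => (oR x == r) && (oZ x == z)) *
      Pr p (fun x => [&& oR x == r, oS1 x == s1, oS0 x == s0,
                         oY1 x == y1 & oY0 x == y0]).

Definition monotonicity p :=
  Pr p (fun x => ~~ (oS0 x <= oS1 x)%N) = 0.

Definition oYz (z : bool) x : bool := if z then oY1 x else oY0 x.

(* Assumption 3: R independent of Y(z) given U, for z = 0,1 *)
Definition homogeneity p :=
  forall (z : bool) r u y,
    Pr p (fun x => [&& oR x == r, oU x == u & oYz z x == y]) * Pr p (fun x => oU x == u)
    = Pr p (fun x => (oR x == r) && (oU x == u)) *
      Pr p (fun x => (oU x == u) && (oYz z x == y)).

Definition positivity p :=
  (forall r, 0 < Pr p (fun x => oR x == r)) /\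
  (forall r, 0 < CPr p (fun x => oZ x) (fun x => oR x == r) < 1) /\
  (forall u, u != u_sbs -> 0 < Pr p (fun x => oU x == u)).

Definition pi_ur p (u : bool * bool) (r : 'I_N) : R :=
  CPr p (fun x => oU x == u) (fun x => oR x == r).

Definition assump4a p :=
  exists r1 r2, pi_ur p u_ss r1 * pi_ur p u_ssb r2 != pi_ur p u_ss r2 * pi_ur p u_ssb r1.
Definition assump4b p :=
  exists r3 r4, pi_ur p u_ssb r3 * pi_ur p u_sbsb r4 != pi_ur p u_ssb r4 * pi_ur p u_sbsb r3.

Definition base_assumptions p :=
  [/\ is_dist p, randomization p, monotonicity p, homogeneity p & positivity p].

Definition same_observed p q :=
  forall r z s y,
    Pr p (fun x => [&& oR x == r, oZ x == z, oS x == s & oY x == y])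
    = Pr q (fun x => [&& oR x == r, oZ x == z, oS x == s & oY x == y]).

Definition identifiable (H : (outcome N -> R) -> Prop) (f : (outcome N -> R) -> R) :=
  forall p q, H p -> H q -> same_observed p q -> f p = f q.

Definition pY p (z : bool) (u : bool * bool) : R :=
  CPr p (fun x => oY x) (fun x => (oZ x == z) && (oU x == u)).

Definition ACE p (u : bool * bool) : R :=
  (\sum_(x | oU x == u) ((oY1 x)%:R - (oY0 x)%:R) * p x) / Pr p (fun x => oU x == u).

End Defs.

From HB Require Import structures.
From mathcomp Require Import all_boot all_order all_algebra ring.
Import Order.TTheory GRing.Theory Num.Theory.
Set Implicit Arguments. Unset Strict Implicit. Unset Printing Implicit Defensive.
Local Open Scope ring_scope.

(* Within trial r, randomization makes the law of (S(z), Y(z)) equal to the observed law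
   of (S, Y) in the arm Z = z, so every P(R = r, S(z) = s, Y(z) = y) is identified. Under
   monotonicity, {S(0) = 1} is the stratum ss and {S(1) = 0} the stratum s's' up to a null
   set, which identifies every mass P(R = r, U = u). Homogeneity factors
   P(R = r, U = u, Y(z) = 1) as P(R = r, U = u) a_z(u), where a_z(u) = P(Y(z) = 1 | U = u).
   Dividing the identified
     P(R = r, S(1) = 1, Y(1) = 1) = sum_{u in {ss, ss'}} P(R = r, U = u) a_1(u)
   by P(R = r) gives, across trials, a linear system in (a_1(ss), a_1(ss')) whose 2x2
   minors are those of Assumption 4(a), while a_1(s's') is read off
   P(R = r, S(1) = 0, Y(1) = 1); the case z = 0 is symmetric under 4(b). Finally
   randomization gives P(Y = 1 | Z = z, U = u) = a_z(u), and ACE_u = a_1(u) - a_0(u). *)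

Lemma rank2_system_unique (F : fieldType) (I : Type) (x y : I -> F) (d1 e1 d2 e2 : F) :
  (exists i j, x i * y j != x j * y i) ->
  (forall i, x i * d1 + y i * e1 = x i * d2 + y i * e2) -> d1 = d2 /\ e1 = e2.
Proof.
move=> [i [j det_neq0]] eq_xy.
have eq0 k : x k * (d1 - d2) + y k * (e1 - e2) = 0.
  by rewrite !mulrBr addrACA -opprD eq_xy subrr.
have det_d : (d1 - d2) * (x i * y j - x j * y i)
    = y j * (x i * (d1 - d2) + y i * (e1 - e2))
      - y i * (x j * (d1 - d2) + y j * (e1 - e2)) by ring.
have det_e : (e1 - e2) * (x i * y j - x j * y i)
    = x i * (x j * (d1 - d2) + y j * (e1 - e2))
      - x j * (x i * (d1 - d2) + y i * (e1 - e2)) by ring.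
rewrite !eq0 !mulr0 subrr in det_d det_e.
rewrite -subr_eq0 in det_neq0.
move/eqP: det_d; move/eqP: det_e.
by rewrite !mulf_eq0 (negbTE det_neq0) !orbF !subr_eq0 => /eqP-> /eqP->.
Qed.

Section Identification.
Variables (R : realFieldType) (N : nat).
Implicit Types (p q : outcome N -> R) (A B E : pred (outcome N)).

Lemma eq_Pr p A B : A =1 B -> Pr p A = Pr p B.
Proof. by move=> eqAB; apply: eq_bigl. Qed.

Lemma Pr_ge0 p A : is_dist p -> 0 <= Pr p A.
Proof. by case=> p_ge0 _; apply: sumr_ge0. Qed.

Lemma le_Pr p A B : is_dist p -> (forall x, A x -> B x) -> Pr p A <= Pr p B.
Proof.
case=> p_ge0 _ subAB; rewrite /Pr [X in _ <= X]big_mkcond [X in X <= _]big_mkcond.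
apply: ler_sum => x _; case Ax: (A x); first by rewrite subAB.
by case: (B x).
Qed.

Lemma PrID p A B :
  Pr p A = Pr p (fun x => A x && B x) + Pr p (fun x => A x && ~~ B x).
Proof. exact: bigID. Qed.

Lemma Pr_disjointU p A B : (forall x, ~~ (A x && B x)) ->
  Pr p (fun x => A x || B x) = Pr p A + Pr p B.
Proof.
move=> disjAB; rewrite (PrID p _ A).
by congr (_ + _); apply: eq_Pr => x; move: (disjAB x); case: (A x); case: (B x).
Qed.

Lemma Pr_partition (T : finType) p A (f : outcome N -> T) :
  Pr p A = \sum_k Pr p (fun x => (f x == k) && A x).
Proof.
rewrite /Pr (partition_big f xpredT) //; apply: eq_bigr => k _.
by apply: eq_bigl => x; rewrite andbC.
Qed.

Lemma Pr_partition_pred (T : finType) p A (f : outcome N -> T) (P : pred T) :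
  Pr p (fun x => A x && P (f x)) = \sum_(k | P k) Pr p (fun x => A x && (f x == k)).
Proof.
rewrite (Pr_partition _ _ f) (bigID P) /= [X in _ + X]big1 ?addr0.
  apply: eq_bigr => k Pk; apply: eq_Pr => x.
  by case: eqP => [->|]; rewrite ?Pk ?andbT ?andbF.
move=> k /negbTE nPk; apply: big_pred0 => x.
by case: eqP => [->|]; rewrite ?nPk ?andbF.
Qed.

Section Monotone.
Variable p : outcome N -> R.
Hypotheses (p_dist : is_dist p) (p_mono : monotonicity p).

Lemma Pr_sbs0 A : Pr p (fun x => A x && (oU x == u_sbs)) = 0.
Proof.
apply/eqP; rewrite eq_le Pr_ge0 // andbT -[X in _ <= X]p_mono.
apply: le_Pr => // x /andP[_].
by rewrite /oU xpair_eqE => /andP[/eqP-> /eqP->].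
Qed.

Lemma eq_Pr_as A B : (forall x, oU x != u_sbs -> A x = B x) -> Pr p A = Pr p B.
Proof.
move=> eqAB; rewrite (PrID p A (fun x => oU x == u_sbs)).
rewrite (PrID p B (fun x => oU x == u_sbs)) !Pr_sbs0 !add0r.
by apply: eq_Pr => x /=; case: (eqVneq (oU x) u_sbs) => [_|/eqAB->]; rewrite ?andbF ?andbT.
Qed.

Definition in_stratum r u E := Pr p (fun x => [&& oR x == r, oU x == u & E x]).

Ltac stratum_cases x r E :=
  rewrite /oU /u_ss /u_ssb /u_sbs /u_sbsb ?xpair_eqE;
  case: (oR x == r); case: (oS1 x); case: (oS0 x); case: (E x).

Lemma Pr_S1 r E : Pr p (fun x => (oR x == r) && (oS1 x && E x))
  = in_stratum r u_ss E + in_stratum r u_ssb E.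
Proof.
rewrite -Pr_disjointU => [|x]; last by stratum_cases x r E.
by apply: eq_Pr => x; stratum_cases x r E.
Qed.

Lemma Pr_notS1 r E : Pr p (fun x => (oR x == r) && (~~ oS1 x && E x))
  = in_stratum r u_sbsb E.
Proof. by apply: eq_Pr_as => x; stratum_cases x r E. Qed.

Lemma Pr_S0 r E : Pr p (fun x => (oR x == r) && (oS0 x && E x))
  = in_stratum r u_ss E.
Proof. by apply: eq_Pr_as => x; stratum_cases x r E. Qed.

Lemma Pr_notS0 r E : Pr p (fun x => (oR x == r) && (~~ oS0 x && E x))
  = in_stratum r u_ssb E + in_stratum r u_sbsb E.
Proof.
rewrite -Pr_disjointU => [|x]; last by stratum_cases x r E.
by apply: eq_Pr => x; stratum_cases x r E.
Qed.

End Monotone.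

Definition trial_mass p r := Pr p (fun x => oR x == r).
Definition arm_mass p r z := Pr p (fun x => (oR x == r) && (oZ x == z)).
Definition latent (x : outcome N) := (oS1 x, oS0 x, oY1 x, oY0 x).
Definition oSz (z : bool) (x : outcome N) : bool := if z then oS1 x else oS0 x.

Lemma randomization_latent p r z (B : pred (bool * bool * bool * bool)) :
  randomization p ->
  Pr p (fun x => (oR x == r) && (oZ x == z) && B (latent x)) * trial_mass p r
  = arm_mass p r z * Pr p (fun x => (oR x == r) && B (latent x)).
Proof.
move=> p_rand; rewrite !(Pr_partition_pred _ _ latent) mulr_suml mulr_sumr.
apply: eq_bigr => -[[[s1 s0] y1] y0] _; have := p_rand r z s1 s0 y1 y0.
have -> : Pr p (fun x => (oR x == r) && (oZ x == z) && (latent x == (s1, s0, y1, y0)))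
  = Pr p (fun x => [&& oR x == r, oZ x == z, oS1 x == s1, oS0 x == s0,
                       oY1 x == y1 & oY0 x == y0]).
  by apply: eq_Pr => x; rewrite /latent !xpair_eqE !andbA.
have -> : Pr p (fun x => (oR x == r) && (latent x == (s1, s0, y1, y0)))
  = Pr p (fun x => [&& oR x == r, oS1 x == s1, oS0 x == s0,
                       oY1 x == y1 & oY0 x == y0]).
  by apply: eq_Pr => x; rewrite /latent !xpair_eqE !andbA.
by [].
Qed.

Lemma randomization_stratum p r z u (E : pred (bool * bool)) : randomization p ->
  Pr p (fun x => (oR x == r) && (oZ x == z) && ((oU x == u) && E (oY1 x, oY0 x)))
    * trial_mass p r
  = arm_mass p r z * in_stratum p r u (fun x => E (oY1 x, oY0 x)).
Proof.
exact: randomization_latent r z (fun l => ((l.1.1.1, l.1.1.2) == u) && E (l.1.2, l.2)).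
Qed.

Lemma Pr_observed p q r z (B : pred (bool * bool)) : same_observed p q ->
  Pr p (fun x => (oR x == r) && (oZ x == z) && B (oS x, oY x))
  = Pr q (fun x => (oR x == r) && (oZ x == z) && B (oS x, oY x)).
Proof.
move=> obs; rewrite !(Pr_partition_pred _ _ (fun x => (oS x, oY x))).
apply: eq_bigr => -[s y] _.
have obs_event p' : Pr p' (fun x => (oR x == r) && (oZ x == z) && ((oS x, oY x) == (s, y)))
    = Pr p' (fun x => [&& oR x == r, oZ x == z, oS x == s & oY x == y]).
  by apply: eq_Pr => x; rewrite xpair_eqE !andbA.
by rewrite !obs_event obs.
Qed.

Lemma arm_mass_observed p q r z : same_observed p q -> arm_mass p r z = arm_mass q r z.
Proof.
have arm_event p' : Pr p' (fun x => (oR x == r) && (oZ x == z) && xpredT (oS x, oY x))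
    = arm_mass p' r z by rewrite /arm_mass; apply: eq_Pr => x; rewrite /= andbT.
by move=> obs; rewrite -!arm_event; exact: Pr_observed r z xpredT obs.
Qed.

Lemma trial_mass_arms p r : trial_mass p r = arm_mass p r true + arm_mass p r false.
Proof.
rewrite /trial_mass (PrID p _ (fun x => oZ x)).
by congr (_ + _); apply: eq_Pr => x; case: (oZ x).
Qed.

Lemma trial_mass_observed p q r : same_observed p q -> trial_mass p r = trial_mass q r.
Proof. by move=> obs; rewrite !trial_mass_arms !(arm_mass_observed _ _ obs). Qed.

Lemma arm_mass_gt0 p r z : positivity p -> 0 < arm_mass p r z.
Proof.
case=> trial_gt0 [arm_frac _]; have tr_gt0 := trial_gt0 r.
have /andP[frac_gt0 frac_lt1] := arm_frac r.
have frac_arm : CPr p (fun x => oZ x) (fun x => oR x == r)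
    = arm_mass p r true / trial_mass p r.
  by rewrite /CPr /arm_mass; congr (_ / _); apply: eq_Pr => x; rewrite eqb_id andbC.
rewrite frac_arm pmulr_lgt0 ?invr_gt0 // in frac_gt0.
rewrite frac_arm ltr_pdivrMr // mul1r trial_mass_arms ltrDl in frac_lt1.
by case: z.
Qed.

Lemma potential_law_identified p q r z (B : pred (bool * bool)) :
  base_assumptions p -> base_assumptions q -> same_observed p q ->
  Pr p (fun x => (oR x == r) && B (oSz z x, oYz z x))
  = Pr q (fun x => (oR x == r) && B (oSz z x, oYz z x)).
Proof.
have from_arm p' : randomization p' -> positivity p' ->
    Pr p' (fun x => (oR x == r) && B (oSz z x, oYz z x))
    = Pr p' (fun x => (oR x == r) && (oZ x == z) && B (oS x, oY x))
      * trial_mass p' r / arm_mass p' r z.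
  move=> rand pos; apply: (canRL (mulfK (lt0r_neq0 (arm_mass_gt0 r z pos)))).
  have := randomization_latent r z
    (fun l => B (if z then l.1.1.1 else l.1.1.2, if z then l.1.2 else l.2)) rand.
  have -> : Pr p' (fun x => (oR x == r) && (oZ x == z)
      && B (if z then (latent x).1.1.1 else (latent x).1.1.2,
            if z then (latent x).1.2 else (latent x).2))
    = Pr p' (fun x => (oR x == r) && (oZ x == z) && B (oS x, oY x)).
    by apply: eq_Pr => x; case: (eqVneq (oZ x) z) => [Zx|_]; rewrite ?andbF // /oS /oY Zx.
  by move->; rewrite mulrC.
move=> [_ p_rand _ _ p_pos] [_ q_rand _ _ q_pos] obs.
rewrite (from_arm p) // (from_arm q) //.
by rewrite (Pr_observed _ _ _ obs) (trial_mass_observed _ obs) (arm_mass_observed _ _ obs).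
Qed.

Definition resp_rate p z u :=
  Pr p (fun x => (oU x == u) && oYz z x) / Pr p (fun x => oU x == u).

Lemma pi_ur_in_stratum p u r : pi_ur p u r = in_stratum p r u xpredT / trial_mass p r.
Proof. by rewrite /pi_ur /CPr; congr (_ / _); apply: eq_Pr => x; rewrite /= andbT andbC. Qed.

Lemma stratum_prob_neq0 p u : base_assumptions p -> u != u_sbs ->
  Pr p (fun x => oU x == u) != 0.
Proof. by case=> _ _ _ _ [_ [_ U_gt0]] Hu; rewrite lt0r_neq0 ?U_gt0. Qed.

Lemma in_stratum_response p r z u : base_assumptions p -> u != u_sbs ->
  in_stratum p r u (oYz z) = in_stratum p r u xpredT * resp_rate p z u.
Proof.
move=> Hp Hu; have [_ _ _ p_hom _] := Hp; have := p_hom z r u true.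
have -> : Pr p (fun x => [&& oR x == r, oU x == u & oYz z x == true])
    = in_stratum p r u (oYz z).
  by rewrite /in_stratum; apply: eq_Pr => x; rewrite eqb_id.
have -> : Pr p (fun x => (oR x == r) && (oU x == u)) = in_stratum p r u xpredT.
  by rewrite /in_stratum; apply: eq_Pr => x; rewrite /= andbT.
have -> : Pr p (fun x => (oU x == u) && (oYz z x == true))
    = Pr p (fun x => (oU x == u) && oYz z x) by apply: eq_Pr => x; rewrite eqb_id.
by move=> hom; rewrite /resp_rate mulrA -hom mulfK ?stratum_prob_neq0.
Qed.

Lemma exists_trial_in_stratum p u : base_assumptions p -> u != u_sbs ->
  exists r, 0 < in_stratum p r u xpredT.
Proof.
move=> Hp Hu; have [p_dist _ _ _ _] := Hp; have := stratum_prob_neq0 Hp Hu.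
have -> : Pr p (fun x => oU x == u) = \sum_r in_stratum p r u xpredT.
  rewrite (Pr_partition _ _ (fun x => oR x)); apply: eq_bigr => r _.
  by apply: eq_Pr => x; rewrite /= andbT.
move=> /eqP /psumr_neq0P[r _|r /andP[_ m_gt0]]; [exact: Pr_ge0 | by exists r].
Qed.

Section TwoModels.
Variables p q : outcome N -> R.
Hypotheses (Hp : base_assumptions p) (Hq : base_assumptions q)
  (obs : same_observed p q).

Let law r z (B : pred (bool * bool)) := potential_law_identified r z B Hp Hq obs.

Lemma stratum_mass_identified r u : u != u_sbs ->
  in_stratum p r u xpredT = in_stratum q r u xpredT.
Proof.
have [[p_dist _ p_mono _ _] [q_dist _ q_mono _ _]] := (Hp, Hq).
have ss : in_stratum p r u_ss xpredT = in_stratum q r u_ss xpredT.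
  rewrite -(Pr_S0 p_dist p_mono) -(Pr_S0 q_dist q_mono).
  exact: law r false (fun sy => sy.1 && true).
have sbsb : in_stratum p r u_sbsb xpredT = in_stratum q r u_sbsb xpredT.
  rewrite -(Pr_notS1 p_dist p_mono) -(Pr_notS1 q_dist q_mono).
  exact: law r true (fun sy => ~~ sy.1 && true).
have ssb : in_stratum p r u_ssb xpredT = in_stratum q r u_ssb xpredT.
  have : Pr p (fun x => (oR x == r) && (oS1 x && xpredT x))
       = Pr q (fun x => (oR x == r) && (oS1 x && xpredT x)).
    exact: law r true (fun sy => sy.1 && true).
  by rewrite !Pr_S1 ss => /addrI.
by case: u => [[] []].
Qed.

Lemma resp_rate_identified_single z u : u != u_sbs ->
  (forall r, in_stratum p r u (oYz z) = in_stratum q r u (oYz z)) ->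
  resp_rate p z u = resp_rate q z u.
Proof.
move=> Hu eq_resp; have [r m_gt0] := exists_trial_in_stratum Hp Hu.
have := eq_resp r; rewrite !in_stratum_response // -stratum_mass_identified //.
exact/mulfI/lt0r_neq0.
Qed.

Lemma resp_rate_identified_pair z u v : u != u_sbs -> v != u_sbs ->
  (exists r1 r2, pi_ur p u r1 * pi_ur p v r2 != pi_ur p u r2 * pi_ur p v r1) ->
  (forall r, in_stratum p r u (oYz z) + in_stratum p r v (oYz z)
           = in_stratum q r u (oYz z) + in_stratum q r v (oYz z)) ->
  resp_rate p z u = resp_rate q z u /\ resp_rate p z v = resp_rate q z v.
Proof.
move=> Hu Hv rank eq_resp; apply: (rank2_system_unique rank) => r.
have := eq_resp r; rewrite !in_stratum_response // -!stratum_mass_identified //.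
rewrite !pi_ur_in_stratum => eq_r.
by rewrite ![_ / trial_mass p r * _]mulrAC -!mulrDl eq_r.
Qed.

Lemma resp_rate1_identified u : assump4a p -> u != u_sbs ->
  resp_rate p true u = resp_rate q true u.
Proof.
have [[p_dist _ p_mono _ _] [q_dist _ q_mono _ _]] := (Hp, Hq).
move=> rank Hu; have [ss ssb] : resp_rate p true u_ss = resp_rate q true u_ss
    /\ resp_rate p true u_ssb = resp_rate q true u_ssb.
  apply: (resp_rate_identified_pair _ _ rank) => // r; rewrite -!Pr_S1.
  exact: law r true (fun sy => sy.1 && sy.2).
have sbsb : resp_rate p true u_sbsb = resp_rate q true u_sbsb.
  apply: resp_rate_identified_single => // r.
  rewrite -(Pr_notS1 p_dist p_mono) -(Pr_notS1 q_dist q_mono).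
  exact: law r true (fun sy => ~~ sy.1 && sy.2).
by case: u Hu => [[] []].
Qed.

Lemma resp_rate0_identified u : assump4b p -> u != u_sbs ->
  resp_rate p false u = resp_rate q false u.
Proof.
have [[p_dist _ p_mono _ _] [q_dist _ q_mono _ _]] := (Hp, Hq).
move=> rank Hu; have [ssb sbsb] : resp_rate p false u_ssb = resp_rate q false u_ssb
    /\ resp_rate p false u_sbsb = resp_rate q false u_sbsb.
  apply: (resp_rate_identified_pair _ _ rank) => // r; rewrite -!Pr_notS0.
  exact: law r false (fun sy => ~~ sy.1 && sy.2).
have ss : resp_rate p false u_ss = resp_rate q false u_ss.
  apply: resp_rate_identified_single => // r.
  rewrite -(Pr_S0 p_dist p_mono) -(Pr_S0 q_dist q_mono).
  exact: law r false (fun sy => sy.1 && sy.2).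
by case: u Hu => [[] []].
Qed.

End TwoModels.


Lemma pY_resp_rate p z u : base_assumptions p -> u != u_sbs -> pY p z u = resp_rate p z u.
Proof.
move=> Hp Hu; have [p_dist p_rand _ _ p_pos] := Hp.
have trial_gt0 r : 0 < trial_mass p r by case: p_pos => trial_pos _; apply: trial_pos.
pose arm_stratum r (E : pred (bool * bool)) :=
  Pr p (fun x => (oR x == r) && (oZ x == z) && ((oU x == u) && E (oY1 x, oY0 x))).
have per_trial r : arm_stratum r (fun y => if z then y.1 else y.2)
    = arm_stratum r xpredT * resp_rate p z u.
  apply: (mulIf (lt0r_neq0 (trial_gt0 r))).
  rewrite mulrAC !randomization_stratum //.
  by rewrite -mulrA -in_stratum_response.
have den : Pr p (fun x => (oZ x == z) && (oU x == u)) = \sum_r arm_stratum r xpredT.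
  rewrite (Pr_partition _ _ (fun x => oR x)); apply: eq_bigr => r _.
  by apply: eq_Pr => x; rewrite /= andbT andbA.
have num : Pr p (fun x => oY x && ((oZ x == z) && (oU x == u)))
    = \sum_r arm_stratum r (fun y => if z then y.1 else y.2).
  rewrite (Pr_partition _ _ (fun x => oR x)); apply: eq_bigr => r _.
  apply: eq_Pr => x /=; case: (eqVneq (oZ x) z) => [<-|_]; rewrite ?andbF //= /oY.
  by case: (oZ x); case: (oR x == r); case: (oU x == u); case: (oY1 x); case: (oY0 x).
have den_gt0 : 0 < Pr p (fun x => (oZ x == z) && (oU x == u)).
  have [r m_gt0] := exists_trial_in_stratum Hp Hu.
  apply: (@lt_le_trans _ _ (arm_stratum r xpredT)); last first.
    by apply: le_Pr => // x /andP[/andP[_ ->] /andP[-> _]].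
  rewrite -(pmulr_lgt0 _ (trial_gt0 r)) randomization_stratum //.
  by rewrite mulr_gt0 ?arm_mass_gt0.
rewrite /pY /CPr num (eq_bigr _ (fun r _ => per_trial r)) -mulr_suml -den.
by rewrite mulrAC divff ?mul1r ?lt0r_neq0.
Qed.

Lemma ACE_resp_rate p u : ACE p u = resp_rate p true u - resp_rate p false u.
Proof.
rewrite /ACE /resp_rate -mulrBl; congr (_ / _).
have indicator (y : pred (outcome N)) :
    \sum_(x | oU x == u) (y x)%:R * p x = \sum_(x | (oU x == u) && y x) p x.
  rewrite (bigID y) /= [X in _ + X]big1 ?addr0 => [|x /andP[_ /negbTE->]].
    by apply: eq_bigr => x /andP[_ ->]; rewrite mul1r.
  by rewrite mul0r.
rewrite /Pr -(indicator (oYz true)) -(indicator (oYz false)) -sumrB.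
by apply: eq_bigr => x _; rewrite mulrBl.
Qed.

End Identification.

Theorem theorem1 (R : realFieldType) (N : nat) :
  forall u : bool * bool, u != u_sbs ->
  [/\ identifiable (fun p : outcome N -> R => base_assumptions p /\ assump4a p)
        (fun p => pY p true u),
      identifiable (fun p : outcome N -> R => base_assumptions p /\ assump4b p)
        (fun p => pY p false u)
    & identifiable
        (fun p : outcome N -> R => [/\ base_assumptions p, assump4a p & assump4b p])
        (fun p => ACE p u)].
Proof.
move=> u Hu; split.
- move=> p q [Hp rank] [Hq _] obs.
  by rewrite !pY_resp_rate // (resp_rate1_identified Hp Hq obs rank Hu).
- move=> p q [Hp rank] [Hq _] obs.
  by rewrite !pY_resp_rate // (resp_rate0_identified Hp Hq obs rank Hu).
- move=> p q [Hp rank_a rank_b] [Hq _ _] obs.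
  by rewrite !ACE_resp_rate (resp_rate1_identified Hp Hq obs rank_a Hu)
    (resp_rate0_identified Hp Hq obs rank_b Hu).
Qed.
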